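(* Let $P:\{-1,1\}^k\to\{0,1\}$ be a predicate and $Q:\{-1,1\}^k\to\mathbb{R}$. Then $P$ is positively information-theoretically useless for $Q$ if and only if there exists a probability measure $\mu$ on $\{-1,1\}^k$ supported on $P^{-1}(1)$ such that $\mathrm{Opt}^+(Q,\mu)=E_Q^+$.
   Context: Boolean values are encoded as $\pm1$. An instance of Max-$P^+$ (no negations) on variables $x_1,\dots,x_n$ consists of $m$ constraints, constraint $j$ given by indices $a_j^1,\dots,a_j^k\in[n]$ pairwise distinct within the constraint; for $x\in\{-1,1\}^n$ let $x_{a_j}=(x_{a_j^1},\dots,x_{a_j^k})$. For $r\in[-1,1]$, let $E_Q(r)=\mathbb{E}[Q(x)]$ where $x$ has independent coordinates each with expectation $r$ (i.e., $x_i=1$ with probability $(1+r)/2$), and $E_Q^+=\max_{r\in[-1,1]}E_Q(r)$. $P$ is positively information-theoretically useless for $Q$ if for every $\epsilon>0$ there is a Max-$P^+$ instance with $\max_x\frac1m\sum_j P(x_{a_j})=1$ and $\max_x\frac1m\sum_j Q(x_{a_j})\le E_Q^+ +\epsilon$. For a probability measure $\mu$ on $\{-1,1\}^k$ and $p,q\in[0,1]$, $\mu^{p,q}$ is obtained by sampling a string from $\mu$ and then, independently for each coordinate, changing a coordinate equal to $1$ to $-1$ with probability $p$ and a coordinate equal to $-1$ to $1$ with probability $q$. $\mathrm{Opt}^+(Q,\mu)=\max_{p,q\in[0,1]}\mathbb{E}_{x\sim\mu^{p,q}}[Q(x)]$. *)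

From HB Require Import structures.
From mathcomp Require Import all_boot all_order all_algebra.
From mathcomp Require Import boolp classical_sets reals.
Set Implicit Arguments. Unset Strict Implicit. Unset Printing Implicit Defensive.
Import Order.TTheory GRing.Theory Num.Theory.
Local Open Scope ring_scope.
Local Open Scope classical_set_scope.

(* Boolean values +-1 encoded as bool: true = 1, false = -1. *)
Definition cube (k : nat) := {ffun 'I_k -> bool}.

Definition sgn {R : realType} (b : bool) : R := if b then 1 else -1.

(* E_Q(r): expectation of Q under independent coordinates of mean r,
   i.e. x_i = 1 with probability (1+r)/2 and x_i = -1 with prob. (1-r)/2. *)
Definition EQ {R : realType} (k : nat) (Q : cube k -> R) (r : R) : R :=
  \sum_(x : cube k) Q x * \prod_(i < k) ((1 + sgn (x i) * r) / 2).

(* E_Q^+ = max_{r in [-1,1]} E_Q(r) (a polynomial in r, so sup = max). *)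
Definition EQplus {R : realType} (k : nat) (Q : cube k -> R) : R :=
  sup [set EQ Q r | r in [set r : R | -1 <= r <= 1]].

(* Transition probability of one coordinate in mu^{p,q}: a 1 becomes -1
   with prob. p, a -1 becomes 1 with prob. q. *)
Definition flip {R : realType} (p q : R) (b c : bool) : R :=
  if b then (if c then 1 - p else p) else (if c then q else 1 - q).

Definition Enoisy {R : realType} (k : nat) (Q : cube k -> R) (mu : cube k -> R)
  (p q : R) : R :=
  \sum_(x : cube k) mu x *
    \sum_(y : cube k) (\prod_(i < k) flip p q (x i) (y i)) * Q y.

Definition Optplus {R : realType} (k : nat) (Q : cube k -> R) (mu : cube k -> R) : R :=
  sup [set Enoisy Q mu pq.1 pq.2 | pq in
        [set pq : R * R | (0 <= pq.1 <= 1) /\ (0 <= pq.2 <= 1)]].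

Definition prob_supported_on {R : realType} (k : nat) (P : cube k -> bool)
  (mu : cube k -> R) : Prop :=
  (forall x, 0 <= mu x) /\ (\sum_(x : cube k) mu x = 1) /\
  (forall x, mu x != 0 -> P x).

(* A Max-P^+ instance on n variables with m constraints; constraint j is the
   index tuple a j : 'I_k -> 'I_n, with pairwise distinct entries. *)
Definition restrict (n k : nat) (x : {ffun 'I_n -> bool}) (aj : 'I_k -> 'I_n)
  : cube k := [ffun i => x (aj i)].

Definition inst_val {R : realType} (n m k : nat) (F : cube k -> R)
  (a : 'I_m -> 'I_k -> 'I_n) (x : {ffun 'I_n -> bool}) : R :=
  m%:R^-1 * \sum_(j < m) F (restrict x (a j)).

Definition pos_useless {R : realType} (k : nat) (P : cube k -> bool)
  (Q : cube k -> R) : Prop :=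
  forall eps : R, 0 < eps ->
  exists (n m : nat) (a : 'I_m -> 'I_k -> 'I_n),
    (0 < m)%N /\ (forall j, injective (a j)) /\
    (exists x, inst_val (fun y => (P y)%:R : R) a x = 1) /\
    (forall x, inst_val (fun y => (P y)%:R : R) a x <= 1) /\
    (forall x, inst_val Q a x <= EQplus Q + eps).

(* An instance whose constraints read pairwise distinct variables turns a satisfying
   assignment x into a distribution mu on P^{-1}(1): the empirical distribution of the
   windows x_{a_j}. Noising x coordinatewise with parameters (p, q) noises every window in
   the same way, so E_{mu^{p,q}}[Q] is the expected value of Q on a random assignment, hence
   at most E_Q^+ + eps. As eps -> 0 these distributions have a cluster point in the compact
   cube [0,1]^{{-1,1}^k}, and Opt^+(Q, -) is Lipschitz, so the cluster point has
   Opt^+ <= E_Q^+. The reverse inequality holds for every mu, because mu^{(1-r)/2,(1+r)/2}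
   is the r-biased product measure.

   Conversely, approximate mu by integer weights w and take the variables (b, v) for
   b = +-1 and v < N, with w(y) copies of the constraint on (y_1, c_1), ..., (y_k, c_k) for
   every injective c : [k] -> [N]. Setting (b, v) to b satisfies all constraints. For any
   assignment, let p and q be the fractions of the v with (1, v), resp. (-1, v), flipped:
   averaging over all maps c instead of the injective ones would give exactly
   E_{(w/W)^{p,q}}[Q] <= Opt^+(Q, mu) + o(1), and non-injective maps are a fraction
   O(k^2/N) of all maps. *)

From Pilot Require Import Defs.
From HB Require Import structures.
From mathcomp Require Import all_boot all_order all_algebra.
From mathcomp Require Import boolp classical_sets reals topology normedtype.
From mathcomp Require Import ring lra zify.
Import Order.TTheory GRing.Theory Num.Theory.
Import numFieldNormedType.Exports.
Set Implicit Arguments. Unset Strict Implicit. Unset Printing Implicit Defensive.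
Local Open Scope ring_scope.

Definition l1norm (R : realType) (T : finType) (f : T -> R) : R := \sum_x `|f x|.

Lemma l1norm_ge0 (R : realType) (T : finType) (f : T -> R) : 0 <= l1norm f.
Proof. by apply: sumr_ge0 => x _. Qed.

Lemma ler_norm_l1norm (R : realType) (T : finType) (f : T -> R) x : `|f x| <= l1norm f.
Proof. by rewrite /l1norm (bigD1 x) //= lerDl; apply: sumr_ge0 => y _. Qed.

Lemma sumr_ord1 (R : realType) (m : nat) : \sum_(j < m) (1 : R) = m%:R.
Proof. by rewrite sumr_const card_ord. Qed.

Lemma mul_div_succ_le (R : realType) (b x : R) : 0 <= b -> 0 <= x -> b * (x / (b + 1)) <= x.
Proof.
move=> b0 x0; rewrite mulrA ler_pdivrMr ?ltr_wpDl //.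
by rewrite mulrDr mulr1 mulrC lerDl.
Qed.

Lemma exists_nat_gt (R : realType) (n0 : nat) (c e : R) :
  0 < e -> exists N : nat, (n0 < N)%N /\ c <= e * N%:R.
Proof.
move=> e0; exists (Num.truncn (c / e) + n0).+1; split; first by rewrite ltnS leq_addl.
rewrite mulrC -ler_pdivrMr //; apply/ltW/(lt_le_trans (truncnS_gt _)).
by rewrite ler_nat ltnS leq_addr.
Qed.

Section Indicators.
Variables (R : realType) (k : nat).

Lemma prod_indicator_ffun (h : 'I_k -> bool) (z : cube k) :
  \prod_(i < k) ((h i == z i)%:R : R) = (([ffun i => h i] : cube k) == z)%:R.
Proof.
case: eqP => [<-|ne]; first by rewrite big1 // => i _; rewrite ffunE eqxx.
case: (boolP [forall i, h i == z i]) => [/forallP H|/forallPn [i Hi]].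
  by exfalso; apply: ne; apply/ffunP => i; rewrite ffunE; apply/eqP.
by rewrite (bigD1 i) //= (negbTE Hi) mul0r.
Qed.

Lemma sum_indicator (g : cube k -> R) (y : cube k) :
  \sum_(z : cube k) g z * (y == z)%:R = g y.
Proof.
rewrite (bigD1 y) //= eqxx mulr1 big1 ?addr0 // => z hz.
by rewrite eq_sym (negbTE hz) mulr0.
Qed.

End Indicators.

Section NoisyExpectation.
Variables (R : realType) (k : nat).
Implicit Types (Q mu f : cube k -> R) (x y : cube k) (p q : R).

Lemma flip_ge0 p q b c : 0 <= p <= 1 -> 0 <= q <= 1 -> 0 <= flip p q b c.
Proof. by case: b; case: c => /= /andP[? ?] /andP[? ?]; rewrite ?subr_ge0. Qed.

Lemma flip_le1 p q b c : 0 <= p <= 1 -> 0 <= q <= 1 -> flip p q b c <= 1.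
Proof. by case: b; case: c => /= /andP[? ?] /andP[? ?]; rewrite ?gerBl. Qed.

Lemma sum_flip p q b : \sum_(c : bool) flip p q b c = 1.
Proof. by rewrite big_bool; case: b => /=; rewrite ?subrK // addrC subrK. Qed.

Lemma sum_prod_flip p q x : \sum_(y : cube k) \prod_(i < k) flip p q (x i) (y i) = 1.
Proof.
transitivity (\prod_(i < k) \sum_(c : bool) flip p q (x i) c).
  by rewrite bigA_distr_bigA.
by rewrite big1 // => i _; exact: sum_flip.
Qed.

Lemma prod_flip_ge0 p q x y : 0 <= p <= 1 -> 0 <= q <= 1 ->
  0 <= \prod_(i < k) flip p q (x i) (y i).
Proof. by move=> hp hq; apply: prodr_ge0 => i _; exact: flip_ge0. Qed.

Lemma prod_flip_le1 p q x y : 0 <= p <= 1 -> 0 <= q <= 1 ->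
  \prod_(i < k) flip p q (x i) (y i) <= 1.
Proof. by move=> hp hq; apply: prodr_ile1 => i _; rewrite flip_ge0 ?flip_le1. Qed.

Definition Enoisy_at Q p q x : R := \sum_(y : cube k) (\prod_(i < k) flip p q (x i) (y i)) * Q y.

Lemma EnoisyE Q mu p q : Enoisy Q mu p q = \sum_x mu x * Enoisy_at Q p q x.
Proof. by []. Qed.

Lemma norm_Enoisy_at_le Q p q x : 0 <= p <= 1 -> 0 <= q <= 1 ->
  `|Enoisy_at Q p q x| <= l1norm Q.
Proof.
move=> hp hq; apply: le_trans (ler_norm_sum _ _ _) _.
apply: ler_sum => y _; rewrite normrM ger0_norm ?prod_flip_ge0 //.
by apply: ler_piMl => //; exact: prod_flip_le1.
Qed.

Lemma Enoisy_le Q mu p q : 0 <= p <= 1 -> 0 <= q <= 1 ->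
  Enoisy Q mu p q <= l1norm mu * l1norm Q.
Proof.
move=> hp hq; rewrite EnoisyE {1}/l1norm mulr_suml.
apply: le_trans (ler_norm _) _; apply: le_trans (ler_norm_sum _ _ _) _.
apply: ler_sum => x _; rewrite normrM; apply: ler_wpM2l => //.
exact: norm_Enoisy_at_le.
Qed.

Lemma Enoisy_lipschitz Q mu f p q : 0 <= p <= 1 -> 0 <= q <= 1 ->
  Enoisy Q mu p q <= Enoisy Q f p q + l1norm Q * l1norm (fun x => mu x - f x).
Proof.
move=> hp hq; rewrite -lerBlDl !EnoisyE -sumrB [l1norm (fun _ => _)]/l1norm mulr_sumr.
apply: ler_sum => x _; rewrite -mulrBl.
apply: le_trans (ler_norm _) _; rewrite normrM mulrC.
by apply: ler_wpM2r => //; exact: norm_Enoisy_at_le.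
Qed.

Section Optimum.
Local Open Scope classical_set_scope.

Lemma Enoisy_le_Optplus Q mu p q : 0 <= p <= 1 -> 0 <= q <= 1 ->
  Enoisy Q mu p q <= Optplus Q mu.
Proof.
move=> hp hq; apply: ub_le_sup; last by exists (p, q).
exists (l1norm mu * l1norm Q) => _ [[p' q'] /= [hp' hq'] <-].
exact: Enoisy_le.
Qed.

Lemma ge_Optplus Q mu c :
  (forall p q, 0 <= p <= 1 -> 0 <= q <= 1 -> Enoisy Q mu p q <= c) -> Optplus Q mu <= c.
Proof.
move=> H; apply: ge_sup.
  by exists (Enoisy Q mu 0 0), (0, 0) => //=; rewrite lexx ler01.
by move=> _ [[p' q'] /= [hp' hq'] <-]; exact: H.
Qed.

Lemma Optplus_lipschitz Q mu f :
  Optplus Q mu <= Optplus Q f + l1norm Q * l1norm (fun x => mu x - f x).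
Proof.
apply: ge_Optplus => p q hp hq; apply: le_trans (Enoisy_lipschitz Q mu f hp hq) _.
by rewrite lerD2r; exact: Enoisy_le_Optplus.
Qed.

(* Whatever the start, a coordinate of mu^{p,q} equals 1 with probability (1+r)/2. *)
Lemma Enoisy_biased Q mu r : \sum_x mu x = 1 ->
  Enoisy Q mu ((1 - r) / 2) ((1 + r) / 2) = EQ Q r.
Proof.
move=> mu1; rewrite EnoisyE.
have at_biased x : Enoisy_at Q ((1 - r) / 2) ((1 + r) / 2) x = EQ Q r.
  rewrite /Enoisy_at /EQ; apply: eq_bigr => y _; rewrite mulrC; congr (_ * _).
  apply: eq_bigr => i _; rewrite /flip /sgn.
  by case: (x i); case: (y i); rewrite ?mul1r ?mulN1r //; field.
under eq_bigr => x _ do rewrite at_biased.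
by rewrite -mulr_suml mu1 mul1r.
Qed.

Lemma EQplus_le_Optplus Q mu : \sum_x mu x = 1 -> EQplus Q <= Optplus Q mu.
Proof.
move=> mu1; apply: ge_sup.
  by exists (EQ Q 0), 0 => //=; apply/andP; split; lra.
move=> _ [r /= /andP[r1 r2] <-]; rewrite -(Enoisy_biased _ _ mu1).
by apply: Enoisy_le_Optplus; apply/andP; split; lra.
Qed.

End Optimum.

Lemma prob_in01 (P : cube k -> bool) mu x : prob_supported_on P mu -> 0 <= mu x <= 1.
Proof.
case=> mu0 [mu1 _]; rewrite mu0 -mu1 (bigD1 x) //= lerDl.
by apply: sumr_ge0 => y _.
Qed.

Lemma prob_supported_on_closed (P : cube k -> bool) mu :
  (forall d, 0 < d -> exists2 f, prob_supported_on P f & l1norm (fun x => mu x - f x) <= d) ->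
  prob_supported_on P mu.
Proof.
move=> approx.
have eq_of_close (a b : R) : (forall d, 0 < d -> `|a - b| <= d) -> a = b.
  move=> H; apply/eqP; rewrite -subr_eq0 -normr_le0.
  by apply/ler_addgt0Pr => d d0; rewrite add0r H.
split; [|split].
- move=> x; apply/ler_addgt0Pr => d d0; have [f [f0 _] fd] := approx d d0.
  have := le_trans (ler_norm_l1norm _ x) fd; rewrite /= ler_distl => /andP[lo _].
  have fx0 := f0 x; lra.
- apply: eq_of_close => d d0; have [f [_ [f1 _]] fd] := approx d d0.
  by rewrite -f1 -sumrB; apply: le_trans (ler_norm_sum _ _ _) fd.
- move=> x; apply: contraR => notPx; apply/eqP; apply: eq_of_close => d d0.
  have [f [_ [_ f_supp]] fd] := approx d d0.
  have fx0 : f x = 0 by apply/eqP; apply: contraR notPx; exact: f_supp.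
  by rewrite -fx0; apply: le_trans (ler_norm_l1norm _ x) fd.
Qed.

End NoisyExpectation.

Section Compactness.
Local Open Scope classical_set_scope.
Variables (R : realType) (T : finType).

Lemma nested_cluster_point (A : R -> set (T -> R)) :
  (forall e, 0 < e -> exists2 f, A e f & forall x, 0 <= f x <= 1) ->
  (forall e1 e2, 0 < e1 -> e1 <= e2 -> A e1 `<=` A e2) ->
  exists mu : T -> R, forall e d, 0 < e -> 0 < d ->
    exists2 f, A e f & l1norm (fun x => mu x - f x) <= d.
Proof.
move=> A_nonempty A_mono.
pose K := fun _ : T => (R : topologicalType).
pose box : set (prod_topology K) := [set f | forall x, `[0, 1] (f x)].
have box_compact : compact box.
  exact: (@tychonoff T K (fun _ => `[0, 1]%classic) (fun _ => @segment_compact R 0 1)).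
pose B e : set (prod_topology K) := A e `&` box.
pose F := filter_from [set e : R | 0 < e] B.
have F_proper : ProperFilter F.
  apply: filter_from_proper.
    apply: filter_from_filter; first by exists 1; rewrite /= ltr01.
    move=> i j /= i0 j0; exists (Num.min i j); first by rewrite /= lt_min i0.
    move=> f [Af bf]; split; split => //; apply: A_mono Af => //;
      by rewrite ?lt_min ?i0 ?j0 ?ge_min ?lexx ?orbT.
  by move=> e /= e0; have [f Af bf] := A_nonempty e e0; exists f; split.
have F_box : F box by exists 1 => //= f [].
have [mu [_ mu_cluster]] := box_compact F F_proper F_box.
exists mu => e d e0 d0.
pose d' := d / (#|{: T}|%:R + 1).
have d'0 : 0 < d' by rewrite divr_gt0 // ltr_wpDl.
have near_mu : nbhs (mu : prod_topology K) [set f | forall x, `|mu x - f x| < d'].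
  have : \forall f \near (mu : prod_topology K), forall x, `|mu x - f x| < d'.
    apply: (@filter_forall (prod_topology K) T
      (fun x (f : prod_topology K) => `|mu x - f x| < d') (nbhs (mu : prod_topology K))) => x.
    apply: (@proj_continuous T K x mu [set y : R | `|mu x - y| < d']).
    by apply/nbhs_ballP; exists d'.
  by [].
have FBe : F (B e) by exists e.
have [f [[Af _] close]] := mu_cluster _ _ FBe near_mu.
exists f => //; apply: le_trans (_ : \sum_(x : T) d' <= d).
  by apply: ler_sum => x _; exact: ltW.
by rewrite sumr_const -mulr_natl; apply: mul_div_succ_le; rewrite ?ler0n ?ltW.
Qed.

End Compactness.

Section Windows.
Variables (R : realType) (k n : nat).

Lemma Enoisy_at_restrict (s : 'I_k -> 'I_n) (p q : R) (x : {ffun 'I_n -> bool})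
    (g : cube k -> R) : injective s ->
  \sum_(x' : {ffun 'I_n -> bool}) (\prod_(v < n) flip p q (x v) (x' v)) * g (Defs.restrict x' s)
  = Enoisy_at g p q (Defs.restrict x s).
Proof.
move=> s_inj.
transitivity (\sum_(z : cube k) g z * \sum_(x' : {ffun 'I_n -> bool})
   (\prod_(v < n) flip p q (x v) (x' v)) * \prod_(i < k) ((x' (s i) == z i)%:R : R)).
  under [RHS]eq_bigr => z _ do rewrite mulr_sumr.
  rewrite [RHS]exchange_big /=; apply: eq_bigr => x' _.
  rewrite -(sum_indicator g (Defs.restrict x' s)) mulr_sumr; apply: eq_bigr => z _.
  by rewrite (prod_indicator_ffun R (fun i => x' (s i))) mulrCA.
apply: eq_bigr => z _; rewrite mulrC; congr (_ * _).
under [RHS]eq_bigr => i _ do rewrite ffunE.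
have by_variable (x' : {ffun 'I_n -> bool}) :
    \prod_(i < k) ((x' (s i) == z i)%:R : R) =
    \prod_(v < n) \prod_(i < k | s i == v) ((x' v == z i)%:R : R).
  rewrite (partition_big s predT) //=; apply: eq_bigr => v _.
  by apply: eq_bigr => i /eqP ->.
under [LHS]eq_bigr => x' _ do rewrite by_variable -big_split /=.
rewrite -(bigA_distr_bigA
  (fun v b => flip p q (x v) b * \prod_(i < k | s i == v) ((b == z i)%:R : R))).
rewrite [RHS](partition_big s predT) //=; apply: eq_bigr => v _.
(* By injectivity a variable is read at most once; an unread one sums out to 1. *)
case: (pickP (fun i => s i == v)) => [i0 /eqP si0 | none].
  have s_v i : (s i == v) = (i == i0) by rewrite -si0 (inj_eq s_inj).
  rewrite (eq_bigl (pred1 i0)) // big_pred1_eq.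
  under eq_bigr => b _ do rewrite (eq_bigl (pred1 i0)) // big_pred1_eq.
  rewrite big_bool -si0; case: (z i0) => /=; rewrite ?mulr1 ?mulr0 ?addr0 ?add0r //.
rewrite [RHS]big_pred0; last by move=> i; exact: none.
rewrite (eq_bigr (fun b => flip p q (x v) b)); first exact: sum_flip.
by move=> b _; rewrite big_pred0 ?mulr1 // => i; exact: none.
Qed.

Variables (m : nat) (a : 'I_m -> 'I_k -> 'I_n).
Hypothesis m_gt0 : (0 < m)%N.

Lemma inst_val_pred_le1 (P : cube k -> bool) x : inst_val (fun y => (P y)%:R : R) a x <= 1.
Proof.
rewrite /inst_val ler_pdivrMl ?ltr0n // mulr1 -sumr_ord1.
by apply: ler_sum => j _; rewrite lern1 leq_b1.
Qed.

Lemma inst_val_pred_eq1 (P : cube k -> bool) x :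
  inst_val (fun y => (P y)%:R : R) a x = 1 -> forall j, P (Defs.restrict x (a j)).
Proof.
have mR0 : (m%:R : R) != 0 by rewrite pnatr_eq0 -lt0n.
move=> /(congr1 (fun t => m%:R * t)); rewrite /inst_val mulrA mulfV // mul1r mulr1 => sum_m.
have unsat_ge0 j : 0 <= 1 - ((P (Defs.restrict x (a j)))%:R : R).
  by case: (P _); rewrite /= ?subrr ?subr0 ?ler01.
have unsat0 : \sum_(j < m) (1 - ((P (Defs.restrict x (a j)))%:R : R)) = 0.
  by rewrite sumrB sumr_ord1 sum_m subrr.
move=> j; have := psumr_eq0P (fun j _ => unsat_ge0 j) unsat0 (i := j) isT.
by case: (P _) => //=; rewrite subr0 => /eqP; rewrite oner_eq0.
Qed.

Definition window_dist (x : {ffun 'I_n -> bool}) (y : cube k) : R :=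
  m%:R^-1 * \sum_(j < m) (Defs.restrict x (a j) == y)%:R.

Lemma window_dist_prob (P : cube k -> bool) x :
  (forall j, P (Defs.restrict x (a j))) -> prob_supported_on P (window_dist x).
Proof.
move=> sat; split; [|split].
- move=> y; apply: mulr_ge0; first by rewrite invr_ge0 ler0n.
  by apply: sumr_ge0 => j _; rewrite ler0n.
- rewrite -mulr_sumr exchange_big /= (eq_bigr (fun _ => 1)) ?sumr_ord1 ?mulVf //.
    by rewrite pnatr_eq0 -lt0n.
  move=> j _; rewrite -[RHS](sum_indicator (fun _ => 1 : R) (Defs.restrict x (a j))).
  by apply: eq_bigr => y _; rewrite mul1r.
- move=> y; apply: contraR => notPy; rewrite /window_dist big1 ?mulr0 // => j _.
  by case: eqP => // wj; move: notPy; rewrite -wj sat.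
Qed.

Hypothesis a_inj : forall j, injective (a j).

Lemma Enoisy_window_dist (Q : cube k -> R) x p q :
  Enoisy Q (window_dist x) p q =
  \sum_(x' : {ffun 'I_n -> bool}) (\prod_(v < n) flip p q (x v) (x' v)) * inst_val Q a x'.
Proof.
rewrite EnoisyE /window_dist.
under eq_bigr => y _ do rewrite -mulrA mulr_suml.
rewrite -mulr_sumr exchange_big /=.
under [RHS]eq_bigr => x' _ do rewrite /inst_val mulrCA mulr_sumr.
rewrite -[RHS]mulr_sumr; congr (_ * _); rewrite [RHS]exchange_big /=; apply: eq_bigr => j _.
rewrite Enoisy_at_restrict // (bigD1 (Defs.restrict x (a j))) //= eqxx mul1r big1 ?addr0 //.
by move=> y wy; rewrite eq_sym (negbTE wy) mul0r.
Qed.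

Lemma Optplus_window_dist_le (Q : cube k -> R) x c :
  (forall x', inst_val Q a x' <= c) -> Optplus Q (window_dist x) <= c.
Proof.
move=> val_le; apply: ge_Optplus => p q hp hq; rewrite Enoisy_window_dist.
apply: le_trans (_ : \sum_(x' : {ffun 'I_n -> bool})
    (\prod_(v < n) flip p q (x v) (x' v)) * c <= _).
  by apply: ler_sum => x' _; apply: ler_wpM2l; [exact: prod_flip_ge0 | exact: val_le].
by rewrite -mulr_suml sum_prod_flip mul1r.
Qed.

End Windows.

Lemma pos_useless_Optplus (R : realType) (k : nat) (P : cube k -> bool) (Q : cube k -> R) :
  pos_useless P Q -> exists mu, prob_supported_on P mu /\ Optplus Q mu = EQplus Q.
Proof.
move=> useless.
pose A e := [set f | prob_supported_on P f /\ Optplus Q f <= EQplus Q + e]%classic.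
have [mu mu_limit] : exists mu : cube k -> R, forall e d, 0 < e -> 0 < d ->
    exists2 f, A e f & l1norm (fun x => mu x - f x) <= d.
  apply: nested_cluster_point => [e e0 | e1 e2 _ le12 f [f_prob f_opt]].
    have [n [m [a [m0 [a_inj [[x sat] [_ val_le]]]]]]] := useless e e0.
    have x_prob := window_dist_prob R m0 (inst_val_pred_eq1 m0 sat).
    exists (window_dist R a x); first by split; last exact: Optplus_window_dist_le.
    by move=> y; exact: prob_in01 y x_prob.
  by split => //; apply: le_trans f_opt _; rewrite lerD2l.
have mu_prob : prob_supported_on P mu.
  apply: prob_supported_on_closed => d d0.
  by have [f [f_prob _] close] := mu_limit 1 d ltr01 d0; exists f.
exists mu; split => //; apply/eqP; rewrite eq_le EQplus_le_Optplus ?andbT; last first.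
  by case: mu_prob => _ [].
apply/ler_addgt0Pr => e e0.
have e2 : 0 < e / 2 by rewrite divr_gt0.
have d0 : 0 < e / 2 / (l1norm Q + 1) by rewrite divr_gt0 // ltr_wpDl ?l1norm_ge0.
have [f [_ f_opt] close] := mu_limit _ _ e2 d0.
apply: le_trans (Optplus_lipschitz Q mu f) _.
have := mul_div_succ_le (l1norm_ge0 Q) (ltW e2).
have := ler_wpM2l (l1norm_ge0 Q) close.
lra.
Qed.

Lemma expn_subn_le_ffact (n m : nat) : ((n - m) ^ m <= n ^_ m)%N.
Proof.
elim: m n => [|m IH] n; first by rewrite expn0 ffactn0.
rewrite ffactnS expnS; apply: leq_mul; first exact: leq_subr.
have -> : (n - m.+1 = n.-1 - m)%N by lia.
exact: IH.
Qed.

Lemma mul_subrX_le (R : realType) (a b : R) k : 0 <= b -> b <= a ->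
  (a ^+ k - b ^+ k) * a <= k%:R * (a - b) * a ^+ k.
Proof.
move=> b0 ba; have a0 : 0 <= a by apply: le_trans ba.
elim: k => [|k IH]; first by rewrite !expr0 subrr !mul0r.
have bk : b ^+ k <= a ^+ k by rewrite lerXn2r // nnegrE.
have h1 : a * ((a ^+ k - b ^+ k) * a) <= a * (k%:R * (a - b) * a ^+ k) by apply: ler_wpM2l.
have h2 : a * b ^+ k * (a - b) <= a * a ^+ k * (a - b).
  by apply: ler_wpM2r; [rewrite subr_ge0 | apply: ler_wpM2l].
rewrite !exprS -natr1; lra.
Qed.

Lemma ffact_gap_le (R : realType) (N k : nat) : (2 * (k * k) + k < N)%N ->
  ((N%:R : R) ^+ k - (N ^_ k)%:R) * N%:R <= 2 * (k * k)%:R * (N ^_ k)%:R.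
Proof.
move=> N_large; have kN : (k <= N)%N by lia.
set a := (N%:R : R); set b := ((N - k)%:R : R).
have a0 : 0 < a by rewrite ltr0n; lia.
have b0 : 0 <= b by rewrite ler0n.
have ba : b <= a by rewrite ler_nat leq_subr.
have a_b : a - b = k%:R by rewrite /a /b natrB // opprB addrC subrK.
have bI : b ^+ k <= (N ^_ k)%:R by rewrite -natrX ler_nat expn_subn_le_ffact.
have gap : (a ^+ k - (N ^_ k)%:R) * a <= (k * k)%:R * a ^+ k.
  apply: le_trans (_ : (a ^+ k - b ^+ k) * a <= _).
    by apply: ler_wpM2r; [exact: ltW | rewrite lerD2l lerN2].
  by apply: le_trans (mul_subrX_le k b0 ba) _; rewrite a_b natrM.
have ka : 2 * (k * k)%:R <= a by rewrite -natrM ler_nat; lia.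
have kk0 : 0 <= (k * k)%:R :> R by rewrite ler0n.
have aI : a ^+ k <= 2 * (N ^_ k)%:R.
  have ak0 : 0 <= a ^+ k by rewrite exprn_ge0 // ltW.
  have : (a ^+ k - (N ^_ k)%:R) * 2 * a <= a ^+ k * a.
    by have := ler_wpM2r ak0 ka; lra.
  rewrite ler_pM2r //; lra.
have := ler_wpM2l kk0 aI; lra.
Qed.

Lemma sum_ord_ltn (R : realType) (M w : nat) : (w <= M)%N ->
  \sum_(t < M) (((t < w)%N)%:R : R) = w%:R.
Proof.
move=> wM; rewrite -(big_mkord xpredT (fun t => ((t < w)%N)%:R)) (@big_cat_nat _ _ _ w) //=.
rewrite [X in _ + X]big1_seq ?addr0; last first.
  by move=> i /andP[_]; rewrite mem_index_iota => /andP[hi _]; rewrite ltnNge hi.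
rewrite (eq_big_seq (fun _ => 1)); last by move=> i; rewrite mem_index_iota => /andP[_ ->].
by rewrite sumr_const_nat subn0.
Qed.

Lemma card_injective_ffun (R : realType) (N k : nat) :
  \sum_(c : {ffun 'I_k -> 'I_N} | injectiveb c) (1 : R) = (N ^_ k)%:R.
Proof.
rewrite (eq_bigl (mem [set c : {ffun 'I_k -> 'I_N} | injectiveb c])); last first.
  by move=> c; rewrite /= inE.
by rewrite sumr_const card_inj_ffuns !card_ord.
Qed.

Section Assignments.
Variables (R : realType) (N : nat) (X : bool -> 'I_N -> bool).

Definition frac_changed (b : bool) : R := (\sum_(v < N) (X b v != b)%:R) / N%:R.

Hypothesis N_gt0 : (0 < N)%N.

Lemma frac_changed_01 b : 0 <= frac_changed b <= 1.
Proof.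
have N0 : (0 : R) < N%:R by rewrite ltr0n.
apply/andP; split.
  by apply: divr_ge0; [apply: sumr_ge0 => v _; rewrite ler0n | exact: ltW].
rewrite ler_pdivrMr // mul1r -sumr_ord1.
by apply: ler_sum => v _; rewrite lern1 leq_b1.
Qed.

Lemma sum_eq_flip b c :
  \sum_(v < N) ((X b v == c)%:R : R) = N%:R * flip (frac_changed true) (frac_changed false) b c.
Proof.
have NR0 : (N%:R : R) != 0 by rewrite pnatr_eq0 -lt0n.
have changed b' : N%:R * frac_changed b' = \sum_(v < N) ((X b' v != b')%:R : R).
  by rewrite /frac_changed mulrC divfK.
have kept b' : \sum_(v < N) ((X b' v == b')%:R : R) =
    N%:R - \sum_(v < N) ((X b' v != b')%:R : R).
  rewrite -sumr_ord1 -sumrB; apply: eq_bigr => v _.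
  by case: (X b' v == b'); rewrite /= ?subr0 ?subrr.
case: b; case: c => /=; rewrite ?kept ?mulrBr ?mulr1 changed //;
  by apply: eq_bigr => v _; case: (X _ v).
Qed.

Lemma sum_all_windows (k : nat) (Q : cube k -> R) (y : cube k) :
  \sum_(c : {ffun 'I_k -> 'I_N}) Q [ffun i => X (y i) (c i)] =
  N%:R ^+ k * Enoisy_at Q (frac_changed true) (frac_changed false) y.
Proof.
transitivity (\sum_(z : cube k) Q z * \sum_(c : {ffun 'I_k -> 'I_N})
    \prod_(i < k) ((X (y i) (c i) == z i)%:R : R)).
  under [RHS]eq_bigr => z _ do rewrite mulr_sumr.
  rewrite [RHS]exchange_big /=; apply: eq_bigr => c _.
  rewrite -(sum_indicator Q [ffun i => X (y i) (c i)]); apply: eq_bigr => z _.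
  by rewrite (prod_indicator_ffun R (fun i => X (y i) (c i))).
rewrite /Enoisy_at mulr_sumr; apply: eq_bigr => z _.
rewrite -(bigA_distr_bigA (fun i v => ((X (y i) v == z i)%:R : R))).
rewrite (eq_bigr (fun i => N%:R * flip (frac_changed true) (frac_changed false) (y i) (z i)));
  last by move=> i _; exact: sum_eq_flip.
by rewrite big_split /= prodr_const card_ord; ring.
Qed.

Lemma sum_injective_windows_le (k : nat) (Q : cube k -> R) (y : cube k) :
  \sum_(c : {ffun 'I_k -> 'I_N} | injectiveb c) Q [ffun i => X (y i) (c i)]
    <= (N ^_ k)%:R * Enoisy_at Q (frac_changed true) (frac_changed false) y
       + 2 * l1norm Q * (N%:R ^+ k - (N ^_ k)%:R).
Proof.
have all := sum_all_windows Q y.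
rewrite (bigID (fun c : {ffun 'I_k -> 'I_N} => injectiveb c)) /= in all.
set D := \sum_(c : {ffun 'I_k -> 'I_N} | ~~ injectiveb c) (1 : R).
have D0 : 0 <= D by apply: sumr_ge0.
have D_eq : N%:R ^+ k - (N ^_ k)%:R = D.
  have : \sum_(c : {ffun 'I_k -> 'I_N}) (1 : R) = N%:R ^+ k.
    by rewrite sumr_const card_ffun !card_ord -natrX.
  rewrite (bigID (fun c : {ffun 'I_k -> 'I_N} => injectiveb c)) /= card_injective_ffun -/D.
  by move=> count_all; lra.
have Nk : N%:R ^+ k = (N ^_ k)%:R + D by rewrite -D_eq addrC subrK.
have noninj_ge : - (l1norm Q * D) <=
    \sum_(c : {ffun 'I_k -> 'I_N} | ~~ injectiveb c) Q [ffun i => X (y i) (c i)].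
  rewrite /D mulr_sumr -sumrN; apply: ler_sum => c _; rewrite mulr1.
  by have := ler_norm_l1norm Q [ffun i => X (y i) (c i)]; rewrite ler_norml => /andP[].
have E_le : Enoisy_at Q (frac_changed true) (frac_changed false) y <= l1norm Q.
  apply: le_trans (ler_norm _) (norm_Enoisy_at_le Q y _ _); exact: frac_changed_01.
have inj_eq : \sum_(c : {ffun 'I_k -> 'I_N} | injectiveb c) Q [ffun i => X (y i) (c i)] =
    N%:R ^+ k * Enoisy_at Q (frac_changed true) (frac_changed false) y
    - \sum_(c : {ffun 'I_k -> 'I_N} | ~~ injectiveb c) Q [ffun i => X (y i) (c i)].
  by rewrite -all addrK.
rewrite inj_eq D_eq Nk.
have := ler_wpM2l D0 E_le; lra.
Qed.

End Assignments.

Section BlowUp.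
Variables (R : realType) (k M N : nat) (w : cube k -> nat).

(* ((y, t), c) is the t-th copy of the constraint on the variables (y_i, c_i). *)
Definition blowup_constraint : pred ((cube k * 'I_M) * {ffun 'I_k -> 'I_N}) :=
  fun s => (s.1.2 < w s.1.1)%N && injectiveb s.2.

Definition blowup (j : 'I_#|blowup_constraint|) (i : 'I_k) :=
  enum_rank (((enum_val j).1.1 i, (enum_val j).2 i) : bool * 'I_N).

Lemma blowup_inj j : injective (blowup j).
Proof.
move=> i1 i2 /enum_rank_inj [_].
have /andP[_ /injectiveP c_inj] : blowup_constraint (enum_val j) := enum_valP j.
exact: c_inj.
Qed.

Lemma blowup_sat (P : cube k -> bool) : (0 < #|blowup_constraint|)%N ->
  (forall y, (0 < w y)%N -> P y) ->
  inst_val (fun y => (P y)%:R : R) blowup [ffun u => (enum_val u).1] = 1.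
Proof.
move=> m0 w_supp; have mR0 : (#|blowup_constraint|%:R : R) != 0 by rewrite pnatr_eq0 -lt0n.
rewrite /inst_val (eq_bigr (fun _ => 1)) ?sumr_ord1 ?mulVf // => j _.
have /andP[t_lt _] : blowup_constraint (enum_val j) := enum_valP j.
have -> : Defs.restrict [ffun u => (enum_val u).1] (blowup j) = (enum_val j).1.1.
  by apply/ffunP => i; rewrite !ffunE enum_rankK.
by rewrite w_supp //; exact: leq_ltn_trans (leq0n _) t_lt.
Qed.

Hypothesis w_le : forall y, (w y <= M)%N.
Local Notation W := (\sum_(y : cube k) ((w y)%:R : R)).

Lemma sum_blowup (F : cube k -> {ffun 'I_k -> 'I_N} -> R) :
  \sum_(j < #|blowup_constraint|) F (enum_val j).1.1 (enum_val j).2 =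
  \sum_(y : cube k) (w y)%:R * \sum_(c : {ffun 'I_k -> 'I_N} | injectiveb c) F y c.
Proof.
rewrite -(big_enum_val (A := blowup_constraint) (fun s => F s.1.1 s.2)) /=.
rewrite (eq_bigl blowup_constraint) // big_mkcond /=.
rewrite -(pair_big xpredT xpredT
  (fun yt c => if blowup_constraint (yt, c) then F yt.1 c else 0)) /=.
rewrite -(pair_big xpredT xpredT (fun y t =>
  \sum_(c : {ffun 'I_k -> 'I_N}) if blowup_constraint ((y, t), c) then F y c else 0)) /=.
apply: eq_bigr => y _.
rewrite -(sum_ord_ltn R (w_le y)) mulr_suml; apply: eq_bigr => t _.
rewrite [in RHS]big_mkcond mulr_sumr; apply: eq_bigr => c _.
by rewrite /blowup_constraint /=; case: (t < w y)%N; case: (injectiveb c); rewrite ?mul1r ?mul0r.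
Qed.

Lemma card_blowup : (#|blowup_constraint|%:R : R) = W * (N ^_ k)%:R.
Proof.
rewrite -sumr_ord1 (sum_blowup (fun _ _ => 1)) mulr_suml.
by apply: eq_bigr => y _; rewrite card_injective_ffun.
Qed.

Lemma blowup_val_le (Q : cube k -> R) x : (2 * (k * k) + k < N)%N -> 0 < W ->
  exists p q : R, [/\ 0 <= p <= 1, 0 <= q <= 1 &
    inst_val Q blowup x <= Enoisy Q (fun y => (w y)%:R / W) p q
                           + 4 * l1norm Q * (k * k)%:R / N%:R].
Proof.
move=> N_large W0; have N0 : (0 < N)%N by exact: leq_ltn_trans N_large.
pose X b v := x (enum_rank ((b, v) : bool * 'I_N)).
exists (frac_changed R X true), (frac_changed R X false).
split; [exact: frac_changed_01 | exact: frac_changed_01 |].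
have I0 : (0 : R) < (N ^_ k)%:R by rewrite ltr0n ffact_gt0; lia.
have windows_le : \sum_(j < #|blowup_constraint|) Q (Defs.restrict x (blowup j)) <=
    (N ^_ k)%:R * \sum_y (w y)%:R * Enoisy_at Q (frac_changed R X true) (frac_changed R X false) y
    + W * (2 * l1norm Q * (N%:R ^+ k - (N ^_ k)%:R)).
  rewrite (sum_blowup (fun y c => Q [ffun i => X (y i) (c i)])) mulr_sumr mulr_suml -big_split /=.
  apply: ler_sum => y _.
  apply: le_trans (ler_wpM2l (ler0n R (w y)) (sum_injective_windows_le X N0 Q y)) _.
  by rewrite mulrDr mulrCA lexx.
have E_f : \sum_y (w y)%:R * Enoisy_at Q (frac_changed R X true) (frac_changed R X false) y
    = W * Enoisy Q (fun y => (w y)%:R / W) (frac_changed R X true) (frac_changed R X false).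
  by rewrite EnoisyE mulr_sumr; apply: eq_bigr => y _; field; rewrite gt_eqF.
have err : 2 * l1norm Q * (N%:R ^+ k - (N ^_ k)%:R) <=
    (N ^_ k)%:R * (4 * l1norm Q * (k * k)%:R / N%:R).
  rewrite mulrA ler_pdivlMr ?ltr0n //.
  have := ler_wpM2l (mulr_ge0 (ler0n R 2) (l1norm_ge0 Q)) (ffact_gap_le R N_large); lra.
rewrite /inst_val card_blowup ler_pdivrMl ?mulr_gt0 //.
apply: le_trans windows_le _; rewrite E_f.
have := ler_wpM2l (ltW W0) err; lra.
Qed.

End BlowUp.

Lemma normalized_weights_close (R : realType) (T : finType) (mu : T -> R) (M : nat)
    (w : T -> nat) :
  \sum_y mu y = 1 -> (0 < M)%N ->
  (forall y, (w y)%:R <= mu y * M%:R) -> (forall y, mu y * M%:R < (w y)%:R + 1) ->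
  0 < \sum_y ((w y)%:R : R) ->
  l1norm (fun y => (w y)%:R / \sum_z ((w z)%:R : R) - mu y) <= 2 * #|{: T}|%:R / M%:R.
Proof.
move=> mu1 M0 w_lo w_hi W0.
rewrite /l1norm -mulrA.
set W := \sum_z ((w z)%:R : R); set A := (M%:R : R).
have A0 : 0 < A by rewrite ltr0n.
have muA : \sum_y mu y * A = A by rewrite -mulr_suml mu1 mul1r.
have A_le : A <= W + #|{: T}|%:R.
  rewrite -{1}muA -sumr_const /W -big_split /=.
  by apply: ler_sum => y _; exact: ltW (w_hi y).
have W_le : W <= A by rewrite -muA /W; apply: ler_sum => y _; exact: w_lo.
set iA := A^-1; set iW := W^-1.
have iA0 : 0 < iA by rewrite invr_gt0.
have AiA : A * iA = 1 by rewrite mulfV // gt_eqF.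
have WiW : W * iW = 1 by rewrite mulfV // gt_eqF.
have iA_le : iA <= iW by rewrite lef_pV2 ?posrE.
(* |u - v| <= u + v - 2 t for every common lower bound t of u and v; here t = w / M. *)
have term_le y : `|(w y)%:R * iW - mu y| <= (w y)%:R * iW - 2 * ((w y)%:R * iA) + mu y.
  have u0 : 0 <= (w y)%:R :> R by rewrite ler0n.
  have h1 : (w y)%:R * iA <= mu y.
    by have := ler_wpM2r (ltW iA0) (w_lo y); rewrite -mulrA AiA mulr1.
  have h2 : (w y)%:R * iA <= (w y)%:R * iW by apply: ler_wpM2l.
  rewrite ler_norml; apply/andP; split; lra.
apply: le_trans (ler_sum _ (fun y _ => term_le y)) _.
rewrite !big_split /= -!mulr_suml sumrN -mulr_sumr -mulr_suml -/W WiW mu1.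
have : (A - W - #|{: T}|%:R) * iA <= 0 by rewrite pmulr_lle0 //; lra.
rewrite !mulrBl AiA; lra.
Qed.

Lemma rational_approx (R : realType) (k : nat) (P : cube k -> bool) (mu : cube k -> R) (M : nat) :
  prob_supported_on P mu -> (#|{: cube k}| < M)%N ->
  exists w : cube k -> nat, [/\ forall y, (w y <= M)%N, forall y, (0 < w y)%N -> P y,
    0 < \sum_y ((w y)%:R : R) &
    l1norm (fun y => (w y)%:R / \sum_z ((w z)%:R : R) - mu y)
      <= 2 * #|{: cube k}|%:R / M%:R].
Proof.
move=> mu_prob KM; have [mu0 [mu1 mu_supp]] := mu_prob.
have M0 : (0 < M)%N by exact: leq_ltn_trans KM.
have MR0 : (0 : R) < M%:R by rewrite ltr0n.
have muM0 y : 0 <= mu y * M%:R by rewrite mulr_ge0 // ltW.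
pose w y := Num.truncn (mu y * M%:R).
have w_lo y : (w y)%:R <= mu y * M%:R by have /andP[] := truncn_itv (muM0 y).
have w_hi y : mu y * M%:R < (w y)%:R + 1.
  by have /andP[_] := truncn_itv (muM0 y); rewrite -natr1.
have W0 : 0 < \sum_y ((w y)%:R : R).
  have : M%:R < \sum_y ((w y)%:R : R) + #|{: cube k}|%:R.
    have -> : (M%:R : R) = \sum_y mu y * M%:R by rewrite -mulr_suml mu1 mul1r.
    have -> : \sum_y ((w y)%:R : R) + #|{: cube k}|%:R = \sum_y ((w y)%:R + 1).
      by rewrite big_split /= sumr_const.
    apply: ltr_sum => [|y _]; last exact: w_hi.
    by apply/hasP; exists [ffun=> true]; rewrite ?mem_index_enum.
  have : (#|{: cube k}|%:R : R) < M%:R by rewrite ltr_nat.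
  lra.
exists w; split => //.
- move=> y; rewrite -(ler_nat R); have /andP[_ mu_le1] := prob_in01 y mu_prob.
  exact: le_trans (w_lo y) (ler_piMl (ltW MR0) mu_le1).
- move=> y w_pos; apply: mu_supp; apply: contraTneq w_pos => mu_y0.
  by rewrite /w mu_y0 mul0r truncn0.
- exact: normalized_weights_close mu1 M0 w_lo w_hi W0.
Qed.

Lemma Optplus_pos_useless (R : realType) (k : nat) (P : cube k -> bool) (Q : cube k -> R)
    (mu : cube k -> R) :
  prob_supported_on P mu -> Optplus Q mu = EQplus Q -> pos_useless P Q.
Proof.
move=> mu_prob opt_mu eps eps0.
have e2 : 0 < eps / 2 by rewrite divr_gt0.
have B0 := l1norm_ge0 Q.
have [M [KM M_large]] := exists_nat_gt #|{: cube k}| (2 * l1norm Q * #|{: cube k}|%:R) e2.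
have [N [kN N_large]] := exists_nat_gt (2 * (k * k) + k) (4 * l1norm Q * (k * k)%:R) e2.
have [w [w_le w_supp W0 w_close]] := rational_approx mu_prob KM.
have M0 : (0 : R) < M%:R by rewrite ltr0n (leq_ltn_trans _ KM).
have N0 : (0 : R) < N%:R by rewrite ltr0n (leq_ltn_trans _ kN).
have m0 : (0 < #|blowup_constraint (M := M) (N := N) w|)%N.
  by rewrite -(ltr0n R) card_blowup // mulr_gt0 // ltr0n ffact_gt0; lia.
exists _, _, (blowup (M := M) (N := N) (w := w)); split => //; split; first exact: blowup_inj.
split; first by eexists; apply: blowup_sat.
split; first by move=> x; apply: inst_val_pred_le1.
move=> x; have [p [q [p01 q01 val_le]]] := blowup_val_le w_le Q x kN W0.
apply: le_trans val_le _.
have approx_err : Enoisy Q (fun y => (w y)%:R / \sum_z ((w z)%:R : R)) p q <= EQplus Q + eps / 2.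
  apply: le_trans (Enoisy_lipschitz Q _ mu p01 q01) _.
  rewrite -opt_mu lerD ?Enoisy_le_Optplus //.
  rewrite ler_pdivlMr // in w_close; rewrite -(ler_pM2r M0).
  have := ler_wpM2l B0 w_close; lra.
have blowup_err : 4 * l1norm Q * (k * k)%:R / N%:R <= eps / 2 by rewrite ler_pdivrMr.
lra.
Qed.

Unset Implicit Arguments.

Theorem theorem6p2 (R : realType) (k : nat) (P : cube k -> bool) (Q : cube k -> R) :
  pos_useless P Q <->
  exists mu : cube k -> R, prob_supported_on P mu /\ Optplus Q mu = EQplus Q.
Proof.
split; first exact: pos_useless_Optplus.
by case=> mu [mu_prob opt_mu]; exact: Optplus_pos_useless mu_prob opt_mu.
Qed.
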